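(* For the generalized coin-tossing process with parameter $p\in(0,1)$, $q=1-p$, and OPs of length $m=3$, the OP probability vector is $\mathbf p=(p^2,\,p^2q,\,p^2q,\,pq^2,\,pq^2,\,q^2)^\top$, and the long-run covariance matrix is $$\Sigma=\begin{pmatrix} p^2(1+2p-3p^2)&p^3q(1-3p)&p^3q(1-3p)&p^2q^2(1-3p)&p^2q^2(1-3p)&-3p^2q^2\\ p^3q(1-3p)&p^2q(1-3p^2q)&p^3q(1-3pq)&-3p^3q^3&p^2q^2(1-3pq)&p^2q^2(1-3q)\\ p^3q(1-3p)&p^3q(1-3pq)&p^2q(1-3p^2q)&p^2q^2(1-3pq)&-3p^3q^3&p^2q^2(1-3q)\\ p^2q^2(1-3p)&-3p^3q^3&p^2q^2(1-3pq)&pq^2(1-3pq^2)&pq^3(1-3pq)&pq^3(3p-2)\\ p^2q^2(1-3p)&p^2q^2(1-3pq)&-3p^3q^3&pq^3(1-3pq)&pq^2(1-3pq^2)&pq^3(3p-2)\\ -3p^2q^2&p^2q^2(1-3q)&p^2q^2(1-3q)&pq^3(3p-2)&pq^3(3p-2)&pq^2(4-3p) \end{pmatrix}.$$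
   Context: Generalized coin-tossing (GCT) process with parameter $p\in(0,1)$, $q=1-p$: a random strict total order on objects $(X_t)_{t\in\mathbb Z}$ defined from mutually independent Bernoulli variables $\xi_{s,t}$, $s<t$, with $\mathbb P(\xi_{s,t}=1)=p$, recursively in $t-s$: if $t-s=1$, $X_s<X_t$ iff $\xi_{s,t}=1$; if $t-s\ge2$ and there is $r\in(s,t)$ with $X_s<X_r<X_t$ then $X_s<X_t$; if there is $r\in(s,t)$ with $X_s>X_r>X_t$ then $X_s>X_t$; otherwise $X_s<X_t$ iff $\xi_{s,t}=1$. $\Pi_t$ is the permutation in $S_3$ giving the ranks of $(X_t,X_{t+1},X_{t+2})$; OPs in lexicographic order are $\pi_1=(1,2,3)$, $\pi_2=(1,3,2)$, $\pi_3=(2,1,3)$, $\pi_4=(2,3,1)$, $\pi_5=(3,1,2)$, $\pi_6=(3,2,1)$. $p_i=\mathbb P(\Pi_0=\pi_i)$, $p_{ij}(k)=\mathbb P(\Pi_0=\pi_i,\Pi_k=\pi_j)$, $\Sigma=(\sigma_{ij})$ with $\sigma_{ij}=p_i(\delta_{ij}-p_j)+\sum_{k=1}^\infty\big(p_{ij}(k)+p_{ji}(k)-2p_ip_j\big)$. *)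

From HB Require Import structures.
From mathcomp Require Import all_boot all_order all_algebra.
From mathcomp Require Import all_classical all_reals.
From mathcomp Require Import topology normedtype sequences.
Set Implicit Arguments. Unset Strict Implicit. Unset Printing Implicit Defensive.
Import Order.TTheory GRing.Theory Num.Theory numFieldNormedType.Exports.
Local Open Scope ring_scope.

(* A realization of the coin variables: xi s t (meaningful for s < t). *)
Definition coins := nat -> nat -> bool.

(* gct_lt_fuel n xi s t = "X_s < X_t" for s < t, by recursion on t - s
   (fuel n >= t - s), exactly following the recursive definition of the
   generalized coin-tossing order. *)
Fixpoint gct_lt_fuel (n : nat) (xi : coins) (s t : nat) : bool :=
  match n with
  | 0 => xi s t
  | n'.+1 =>
    if t == s.+1 then xi s t
    else if has (fun r => gct_lt_fuel n' xi s r && gct_lt_fuel n' xi r t)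
                (iota s.+1 (t - s.+1)) then true
    else if has (fun r => ~~ gct_lt_fuel n' xi s r && ~~ gct_lt_fuel n' xi r t)
                (iota s.+1 (t - s.+1)) then false
    else xi s t
  end.

Definition gct_lt (xi : coins) (a b : nat) : bool :=
  if (a < b)%N then gct_lt_fuel (b - a) xi a b
  else if (b < a)%N then ~~ gct_lt_fuel (a - b) xi b a
  else false.

Definition gct_rank (xi : coins) (t a : nat) : nat :=
  (count (fun b => gct_lt xi (t + b) (t + a)) [:: 0; 1; 2]).+1.

Definition OP (xi : coins) (t : nat) : nat * nat * nat :=
  (gct_rank xi t 0, gct_rank xi t 1, gct_rank xi t 2).

(* pi_1, ..., pi_6 in lexicographic order (indexed by 'I_6, i.e. 0..5) *)
Definition pi_list : seq (nat * nat * nat) :=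
  [:: (1,2,3); (1,3,2); (2,1,3); (2,3,1); (3,1,2); (3,2,1)]%N.
Definition pi_op (i : 'I_6) : nat * nat * nat := nth (0,0,0)%N pi_list i.

Section Prob.
Variable R : realType.
Variable p : R.

(* Independent Bernoulli(p) coins on all pairs (s,t), s < t, of the window
   {0,...,N}.  A finite function f on 'I_N.+1 * 'I_N.+1 encodes the coins;
   coordinates with s >= t are irrelevant and pinned to false. *)
Definition coin_weight (N : nat) (f : {ffun 'I_N.+1 * 'I_N.+1 -> bool}) : R :=
  \prod_(st : 'I_N.+1 * 'I_N.+1)
    (if (val st.1 < val st.2)%N then (if f st then p else 1 - p)
     else (if f st then 0 else 1)).

Definition coins_of (N : nat) (f : {ffun 'I_N.+1 * 'I_N.+1 -> bool}) : coins :=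
  fun s t => if (s < N.+1)%N && (t < N.+1)%N then f (inord s, inord t) else false.

(* probability of an event depending only on the coins inside the window
   {0,...,N} (the finite-dimensional marginal of the i.i.d. family) *)
Definition prob (N : nat) (E : coins -> bool) : R :=
  \sum_(f : {ffun 'I_N.+1 * 'I_N.+1 -> bool}) coin_weight f * (E (coins_of f))%:R.

Definition op_prob (i : 'I_6) : R := prob 2 (fun xi => OP xi 0 == pi_op i).

Definition op_prob2 (i j : 'I_6) (k : nat) : R :=
  prob (k + 2) (fun xi => (OP xi 0 == pi_op i) && (OP xi k == pi_op j)).

Definition cov_term (i j : 'I_6) (k : nat) : R :=
  op_prob2 i j k + op_prob2 j i k - 2 * op_prob i * op_prob j.

Definition Sigma (i j : 'I_6) : R :=
  op_prob i * ((i == j)%:R - op_prob j)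
  + limn (series (fun k => cov_term i j k.+1)).

End Prob.

From HB Require Import structures.
From mathcomp Require Import all_boot all_order all_algebra.
From mathcomp Require Import all_classical all_reals.
From mathcomp Require Import topology normedtype sequences.
From mathcomp Require Import ring zify.
Import Order.TTheory GRing.Theory Num.Theory numFieldNormedType.Exports.
Local Open Scope ring_scope.
Set Implicit Arguments. Unset Strict Implicit. Unset Printing Implicit Defensive.

(* Whether X_s < X_t (s < t) depends only on the coins xi a b with s <= a < b <= t,
   so the pattern Pi_k is a function of the three coins of the window
   {k, k+1, k+2}.  Marginalising the product Bernoulli measure onto the finitely
   many coins an event depends on turns its probability into a polynomial in p
   whose coefficients count bit strings; these counts are evaluated by
   computation.  For k >= 3 the windows of Pi_0 and Pi_k are disjoint, so
   p_ij(k) = p_i p_j and only the lags k = 1, 2 contribute to Sigma. *)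

Fixpoint bitseqs (n : nat) : seq bitseq :=
  if n is n'.+1 then map (cons true) (bitseqs n') ++ map (cons false) (bitseqs n')
  else [:: [::]].

Lemma size_bitseqs n bs : bs \in bitseqs n -> size bs = n.
Proof.
elim: n bs => [|n IH] bs /=; first by rewrite inE => /eqP ->.
by rewrite mem_cat => /orP[] /mapP[c /IH <- ->].
Qed.

Lemma big_bitseqs_cat (R : nmodType) m n (G : bitseq -> R) :
  \sum_(bs <- bitseqs (m + n)) G bs = \sum_(x <- bitseqs m) \sum_(y <- bitseqs n) G (x ++ y).
Proof.
elim: m G => [|m IH] G; first by rewrite add0n big_seq1.
by rewrite addSn /= !big_cat !big_map !IH.
Qed.

Section ProductWeight.
Variables (R : comPzRingType) (I : finType) (w : I -> bool -> R).
Hypothesis w_sum1 : forall i, w i true + w i false = 1.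

Definition pweight (f : {ffun I -> bool}) : R := \prod_i w i (f i).

Definition fupd (f : {ffun I -> bool}) (x : I) (b : bool) : {ffun I -> bool} :=
  [ffun i => if i == x then b else f i].

Definition ffun_of_seq (xs : seq I) (bs : bitseq) : {ffun I -> bool} :=
  [ffun i => nth false bs (index i xs)].

Definition seq_weight (xs : seq I) (bs : bitseq) : R := \prod_(ib <- zip xs bs) w ib.1 ib.2.

Lemma fupd_id f x : fupd f x (f x) = f.
Proof. by apply/ffunP => i; rewrite ffunE; case: eqP => [->|]. Qed.

Lemma fupd_fupd f x b c : fupd (fupd f x c) x b = fupd f x b.
Proof. by apply/ffunP => i; rewrite !ffunE; case: eqP. Qed.

Lemma sum_pweight : \sum_f pweight f = 1.
Proof.
rewrite /pweight -(bigA_distr_bigA (fun i b => w i b)) /=.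
by apply: big1 => i _; rewrite big_bool; exact: w_sum1.
Qed.

Lemma sum_fupd_invariant x b c (K : {ffun I -> bool} -> R) :
  (forall f d, K (fupd f x d) = K f) ->
  \sum_(f : {ffun I -> bool}) (f x == b)%:R * K f =
  \sum_(f : {ffun I -> bool}) (f x == c)%:R * K f.
Proof.
move=> hK; have [->//|/negbTE cb] := eqVneq c b.
pose toggle f := fupd f x (~~ f x).
have toggleK : involutive toggle.
  by move=> f; rewrite /toggle fupd_fupd ffunE eqxx negbK fupd_id.
rewrite (reindex_inj (inv_inj toggleK)); apply: eq_bigr => f _.
by rewrite /toggle hK ffunE eqxx; case: (f x) b c cb => [] [] [].
Qed.

Lemma sum_pweight_coord x b (H : {ffun I -> bool} -> R) :
  (forall f c, H (fupd f x c) = H f) ->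
  \sum_f pweight f * ((f x == b)%:R * H f) = w x b * \sum_f pweight f * H f.
Proof.
move=> hH; pose K (f : {ffun I -> bool}) := \prod_(i | i != x) w i (f i) * H f.
have hK (f : {ffun I -> bool}) c : K (fupd f x c) = K f.
  rewrite /K hH; congr (_ * _); apply: eq_bigr => i /negbTE ix.
  by rewrite ffunE ix.
have pweightE (f : {ffun I -> bool}) : pweight f * H f = w x (f x) * K f.
  by rewrite /pweight (bigD1 x) // mulrA.
have wxE (f : {ffun I -> bool}) :
    w x (f x) = (f x == b)%:R * w x b + (f x == ~~ b)%:R * w x (~~ b).
  by case: (f x) b => [] []; rewrite /= ?mul1r ?mul0r ?addr0 ?add0r.
transitivity (w x b * \sum_(f : {ffun I -> bool}) (f x == b)%:R * K f).
  rewrite mulr_sumr; apply: eq_bigr => f _; rewrite mulrCA pweightE.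
  by case: eqP => [->|_]; rewrite /= ?mul1r ?mul0r ?mulr0.
congr (_ * _); under [RHS]eq_bigr do rewrite pweightE wxE mulrDl.
rewrite big_split /=.
under [X in X + _]eq_bigr do rewrite mulrAC.
under [X in _ + X]eq_bigr do rewrite mulrAC.
rewrite -!mulr_suml -(sum_fupd_invariant b (~~ b) hK) -mulrDr.
have -> : w x b + w x (~~ b) = 1 by case: (b); rewrite ?w_sum1 // addrC w_sum1.
by rewrite mulr1.
Qed.

Lemma sum_pweight_marginal (xs : seq I) (G : {ffun I -> bool} -> R) : uniq xs ->
  (forall f g : {ffun I -> bool}, {in xs, f =1 g} -> G f = G g) ->
  \sum_f pweight f * G f = \sum_(bs <- bitseqs (size xs)) seq_weight xs bs * G (ffun_of_seq xs bs).
Proof.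
elim: xs G => [|x xs IH] G /=.
  move=> _ hG; rewrite big_seq1 /seq_weight big_nil mul1r.
  under eq_bigr do rewrite (hG _ (ffun_of_seq [::] [::])) //.
  by rewrite -mulr_suml sum_pweight mul1r.
move=> /andP[xnin uq] hG.
have splitG f : G f = \sum_(b : bool) (f x == b)%:R * G (fupd f x b).
  by rewrite big_bool; case hfx: (f x); rewrite /= ?mul1r ?mul0r ?addr0 ?add0r -hfx fupd_id.
under eq_bigr do rewrite splitG mulr_sumr.
rewrite exchange_big big_bool /= big_cat !big_map.
have step b : \sum_f pweight f * ((f x == b)%:R * G (fupd f x b)) =
    \sum_(bs <- bitseqs (size xs))
      seq_weight (x :: xs) (b :: bs) * G (ffun_of_seq (x :: xs) (b :: bs)).
  rewrite (@sum_pweight_coord x b (fun f => G (fupd f x b))); last first.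
    by move=> f c; rewrite fupd_fupd.
  rewrite IH // => [|f g hfg]; last first.
    by apply: hG => i; rewrite inE !ffunE; case: eqP => // _ /hfg.
  rewrite mulr_sumr; apply: eq_bigr => bs _.
  rewrite /seq_weight big_cons mulrA; congr (_ * G _).
  by apply/ffunP => i; rewrite !ffunE /= eq_sym; case: eqP.
by rewrite !step.
Qed.

End ProductWeight.

Definition coins_of_seq (xs : seq (nat * nat)) (bs : bitseq) : coins :=
  fun s t => nth false bs (index (s, t) xs).

Definition depends_on (xs : seq (nat * nat)) (E : coins -> bool) :=
  forall xi xi' : coins, (forall s t, (s, t) \in xs -> xi s t = xi' s t) -> E xi = E xi'.

Definition coin_cell N (st : nat * nat) : 'I_N.+1 * 'I_N.+1 := (inord st.1, inord st.2).

Lemma coin_cell_eq N a b : (a.1 <= N)%N -> (a.2 <= N)%N -> (b.1 <= N)%N -> (b.2 <= N)%N ->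
  (coin_cell N a == coin_cell N b) = (a == b).
Proof.
case: a b => [a1 a2] [b1 b2] /= h1 h2 h3 h4.
apply/eqP/eqP => [[]|[-> ->]] //.
by move=> /(congr1 val) + /(congr1 val); rewrite /= !inordK // => -> ->.
Qed.

Section CoinWindow.
Variables (R : realType) (p : R).

Definition bern_weight (bs : bitseq) : R := \prod_(b <- bs) (if b then p else 1 - p).

(* [coin_weight] is [pweight coin_bias] by conversion. *)
Definition coin_bias N (st : 'I_N.+1 * 'I_N.+1) (c : bool) : R :=
  if (val st.1 < val st.2)%N then (if c then p else 1 - p) else (if c then 0 else 1).

Lemma coin_bias_sum1 N st : coin_bias (N := N) st true + coin_bias st false = 1.
Proof. by rewrite /coin_bias; case: ifP => _; rewrite ?add0r // addrC subrK. Qed.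

Variables (N : nat) (xs : seq (nat * nat)).
Hypothesis xs_window : all [pred st | (st.1 < st.2 <= N)%N] xs.

Let cell_bounds st : st \in xs -> [/\ (st.1 < st.2)%N, (st.1 <= N)%N & (st.2 <= N)%N].
Proof.
move=> /(allP xs_window) /andP[h1 h2]; split => //.
exact: leq_trans (ltnW h1) h2.
Qed.

Lemma seq_weight_coin_cells bs : size bs = size xs ->
  seq_weight (@coin_bias N) (map (coin_cell N) xs) bs = bern_weight bs.
Proof.
rewrite /seq_weight /bern_weight.
elim: xs bs cell_bounds => [|x ys IH] [|b bs] bounds //=; first by rewrite !big_nil.
case=> sz.
rewrite !big_cons IH // => [|st hst]; last by apply: bounds; rewrite inE hst orbT.
have [h1 h2 h3] := bounds x (mem_head _ _).
by rewrite /coin_bias /= !inordK ?ltnS // h1.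
Qed.

Lemma coins_of_coin_cells bs : size bs = size xs ->
  coins_of (ffun_of_seq (map (coin_cell N) xs) bs) = coins_of_seq xs bs.
Proof.
move=> sz; apply: funext => s; apply: funext => t.
rewrite /coins_of /coins_of_seq; case: ifP => [/andP[hs ht]|hst].
  rewrite ffunE; congr nth; rewrite !ltnS in hs ht.
  elim: xs cell_bounds {sz} => [|x ys IH] //= bounds.
  have [_ h2 h3] := bounds x (mem_head _ _).
  rewrite (coin_cell_eq (b := (s, t))) // IH // => st hst.
  by apply: bounds; rewrite inE hst orbT.
rewrite nth_default // sz memNindex //; apply/negP => /cell_bounds [_ h2 h3].
by move: hst; rewrite !ltnS h2 h3.
Qed.

Lemma prob_marginal E : uniq xs -> depends_on xs E ->
  prob p N E = \sum_(bs <- bitseqs (size xs)) bern_weight bs * (E (coins_of_seq xs bs))%:R.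
Proof.
move=> uq hE.
rewrite [LHS](@sum_pweight_marginal _ _ _ (@coin_bias_sum1 N) (map (coin_cell N) xs)).
- rewrite size_map big_seq [RHS]big_seq; apply: eq_bigr => bs /size_bitseqs sz.
  by rewrite seq_weight_coin_cells // coins_of_coin_cells.
- rewrite map_inj_in_uniq // => a b ha hb /eqP.
  have [_ ? ?] := cell_bounds ha; have [_ ? ?] := cell_bounds hb.
  by rewrite coin_cell_eq // => /eqP.
move=> f g hfg; rewrite (hE _ (coins_of g)) // => s t hst.
have [_ h1 h2] := cell_bounds hst.
by rewrite /coins_of !ltnS h1 h2; apply: hfg; apply/mapP; exists (s, t).
Qed.

End CoinWindow.

Lemma gct_lt_fuel_local n (xi xi' : coins) s t : (s < t)%N ->
  (forall a b, (s <= a)%N -> (a < b)%N -> (b <= t)%N -> xi a b = xi' a b) ->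
  gct_lt_fuel n xi s t = gct_lt_fuel n xi' s t.
Proof.
elim: n s t => [|n IH] s t hst h /=; first exact: h.
have split_has (op : bool -> bool -> bool) :
    has (fun r => op (gct_lt_fuel n xi s r) (gct_lt_fuel n xi r t)) (iota s.+1 (t - s.+1)) =
    has (fun r => op (gct_lt_fuel n xi' s r) (gct_lt_fuel n xi' r t)) (iota s.+1 (t - s.+1)).
  apply: eq_in_has => r; rewrite mem_iota subnKC // => /andP[h1 h2].
  by rewrite (IH s r) ?(IH r t) // => a b *; apply: h; lia.
by rewrite h // (split_has andb) (split_has (fun a b => ~~ a && ~~ b)).
Qed.

Definition coins_shift (xi : coins) k : coins := fun a b => xi (a + k)%N (b + k)%N.

Lemma gct_lt_fuel_shift n xi k s t :
  gct_lt_fuel n xi (s + k) (t + k) = gct_lt_fuel n (coins_shift xi k) s t.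
Proof.
elim: n s t => [|n IH] s t //=.
rewrite -addSn eqn_add2r subnDr (addnC s.+1) iotaDl !has_map.
have shift_has (op : bool -> bool -> bool) (I : seq nat) :
    has (preim (addn k)
           (fun r => op (gct_lt_fuel n xi (s + k) r) (gct_lt_fuel n xi r (t + k)))) I =
    has (fun r => op (gct_lt_fuel n (coins_shift xi k) s r)
                     (gct_lt_fuel n (coins_shift xi k) r t)) I.
  by apply: eq_has => r /=; rewrite (addnC k r) !IH.
by rewrite (shift_has andb) (shift_has (fun a b => ~~ a && ~~ b)).
Qed.

Lemma gct_lt_shift xi k a b : gct_lt xi (k + a) (k + b) = gct_lt (coins_shift xi k) a b.
Proof. by rewrite /gct_lt !ltn_add2l !subnDl (addnC k a) (addnC k b) !gct_lt_fuel_shift. Qed.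

Lemma OP_shift xi k : OP xi k = OP (coins_shift xi k) 0.
Proof.
by rewrite /OP /gct_rank; congr (_, _, _); congr S; apply: eq_count => b;
  rewrite gct_lt_shift !add0n.
Qed.

Definition op_cells (k : nat) : seq (nat * nat) := [:: (k, k.+1); (k.+1, k.+2); (k, k.+2)].

Lemma OP0_local (xi xi' : coins) :
  (forall s t, (s, t) \in op_cells 0 -> xi s t = xi' s t) -> OP xi 0 = OP xi' 0.
Proof.
move=> h.
have coins_eq a b : (a < b)%N -> (b <= 2)%N -> xi a b = xi' a b.
  by case: a b => [|[|[|a]]] [|[|[|[|b]]]] //= _ _; apply: h; rewrite !inE.
have lt_eq a b : (a <= 2)%N -> (b <= 2)%N -> gct_lt xi a b = gct_lt xi' a b.
  move=> ha hb; rewrite /gct_lt; case: ltnP => hab; last case: ltnP => hba //.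
    by rewrite (@gct_lt_fuel_local _ xi xi') // => x y _ hxy hy; apply: coins_eq; lia.
  by rewrite (@gct_lt_fuel_local _ xi xi') // => x y _ hxy hy; apply: coins_eq; lia.
rewrite /OP /gct_rank; congr (_, _, _); congr S; apply: eq_in_count => b;
  by rewrite !inE => /or3P[] /eqP ->; apply: lt_eq.
Qed.

Lemma OP_depends_on k (c : nat * nat * nat) : depends_on (op_cells k) (fun xi => OP xi k == c).
Proof.
move=> xi xi' h; rewrite (OP_shift xi) (OP_shift xi'); congr (_ == _).
apply: OP0_local => s t hst; apply: h.
by move: hst; rewrite !inE => /or3P[] /eqP [-> ->]; rewrite !xpair_eqE; lia.
Qed.

Definition shift_cell k (st : nat * nat) : nat * nat := ((st.1 + k)%N, (st.2 + k)%N).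

Lemma shift_cell_inj k : injective (shift_cell k).
Proof. by move=> [a b] [c d] [/addIn -> /addIn ->]. Qed.

Lemma op_cells_shift k : op_cells k = map (shift_cell k) (op_cells 0).
Proof. by rewrite /op_cells /shift_cell /= !add0n !addSn. Qed.

Lemma OP_coins_of_seq_shift k bs :
  OP (coins_of_seq (op_cells k) bs) k = OP (coins_of_seq (op_cells 0) bs) 0.
Proof.
rewrite OP_shift; congr OP; apply: funext => s; apply: funext => t.
rewrite /coins_shift /coins_of_seq op_cells_shift.
rewrite (_ : ((s + k)%N, (t + k)%N) = shift_cell k (s, t)) // index_map //.
exact: shift_cell_inj.
Qed.

Lemma sum_natr_pred (R : pzSemiRingType) (T : Type) (s : seq T) (P : pred T) (c : R) :
  \sum_(x <- s) (P x)%:R * c = (count P s)%:R * c.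
Proof. by elim: s => [|x s IH]; rewrite ?big_nil ?mul0r // big_cons IH /= natrD mulrDl. Qed.

Section Counting.
Variables (R : realType) (p : R).

Lemma bern_weightE bs :
  bern_weight p bs = p ^+ count id bs * (1 - p) ^+ (size bs - count id bs).
Proof.
elim: bs => [|b bs IH]; first by rewrite /bern_weight big_nil mul1r.
rewrite /bern_weight big_cons -/(bern_weight p bs) IH.
case: b => /=; first by rewrite add1n subSS exprS mulrA.
by rewrite add0n subSn ?count_size // exprS; ring.
Qed.

Definition bern_count_poly n (F : bitseq -> bool) : R :=
  \sum_(a <- iota 0 n.+1)
     (count (fun bs => F bs && (count id bs == a)) (bitseqs n))%:R * (p ^+ a * (1 - p) ^+ (n - a)).

Lemma sum_bern_counts n (F : bitseq -> bool) :
  \sum_(bs <- bitseqs n) bern_weight p bs * (F bs)%:R = bern_count_poly n F.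
Proof.
rewrite /bern_count_poly; under [RHS]eq_bigr do rewrite -sum_natr_pred.
rewrite [RHS]exchange_big big_seq [RHS]big_seq; apply: eq_bigr => bs /size_bitseqs sz.
have ones_in : count id bs \in iota 0 n.+1 by rewrite mem_iota add0n ltnS -sz count_size.
rewrite (bigD1_seq _ ones_in (iota_uniq _ _)) /= eqxx andbT big1 ?addr0.
  by rewrite bern_weightE sz mulrC.
by move=> a /negbTE ha; rewrite eq_sym ha andbF mul0r.
Qed.

End Counting.

Ltac eval_counts := repeat match goal with |- context [count ?P (bitseqs ?n)] =>
  let v := eval vm_compute in (count P (bitseqs n)) in
  rewrite (_ : count P (bitseqs n) = v); [| by vm_compute] end.

Section OrdinalPatterns.
Variables (R : realType) (p : R).

Lemma op_prob_bits (i : 'I_6) : op_prob p i =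
  \sum_(bs <- bitseqs 3) bern_weight p bs * (OP (coins_of_seq (op_cells 0) bs) 0 == pi_op i)%:R.
Proof. by rewrite /op_prob (@prob_marginal _ _ 2 (op_cells 0)) //; apply: OP_depends_on. Qed.

Lemma op_prob_poly i :
  op_prob p i = bern_count_poly p 3 (fun bs => OP (coins_of_seq (op_cells 0) bs) 0 == pi_op i).
Proof. by rewrite op_prob_bits sum_bern_counts. Qed.

Lemma op_probE (i : 'I_6) : op_prob p i = nth 0 [:: p ^+ 2; p ^+ 2 * (1 - p); p ^+ 2 * (1 - p);
                             p * (1 - p) ^+ 2; p * (1 - p) ^+ 2; (1 - p) ^+ 2] i.
Proof.
rewrite op_prob_poly /bern_count_poly; case: i => [[|[|[|[|[|[|i]]]]]] hi] //=;
  rewrite !big_cons big_nil; eval_counts; rewrite /=; ring.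
Qed.

End OrdinalPatterns.

Lemma coins_of_seq_catl A B x y s t : size x = size A -> (s, t) \in A ->
  coins_of_seq (A ++ B) (x ++ y) s t = coins_of_seq A x s t.
Proof. by move=> sz hst; rewrite /coins_of_seq index_cat hst nth_cat sz index_mem hst. Qed.

Lemma coins_of_seq_catr A B x y s t : size x = size A -> (s, t) \notin A ->
  coins_of_seq (A ++ B) (x ++ y) s t = coins_of_seq B y s t.
Proof.
move=> sz hst; rewrite /coins_of_seq index_cat (negbTE hst) nth_cat sz.
by rewrite ltnNge leq_addr /= addKn.
Qed.

Section Independence.
Variables (R : realType) (p : R).

Lemma depends_on_OP2 X k (i j : 'I_6) : {subset op_cells 0 ++ op_cells k <= X} ->
  depends_on X (fun xi => (OP xi 0 == pi_op i) && (OP xi k == pi_op j)).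
Proof.
move=> sub xi xi' h; congr andb;
  [apply: (@OP_depends_on 0 _ xi xi') | apply: (@OP_depends_on k _ xi xi')];
  by move=> s t hst; apply/h/sub; rewrite mem_cat hst ?orbT.
Qed.

(* Patterns at lag [k >= 3] are read off disjoint sets of coins. *)
Lemma op_prob2_indep i j k : (3 <= k)%N -> op_prob2 p i j k = op_prob p i * op_prob p j.
Proof.
move=> hk.
have disjoint st : st \in op_cells k -> st \notin op_cells 0.
  by case: st => s t; rewrite !inE !xpair_eqE; lia.
have cells_uniq : uniq (op_cells 0 ++ op_cells k).
  rewrite cat_uniq; apply/and3P; split => //; first by apply/hasPn => st /disjoint.
  by rewrite /= !inE !xpair_eqE; lia.
have cells_window : all [pred st | (st.1 < st.2 <= k + 2)%N] (op_cells 0 ++ op_cells k).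
  by rewrite all_cat /=; apply/andP; split; apply/and4P; split => //; lia.
rewrite /op_prob2 (@prob_marginal _ _ (k + 2) _ cells_window) //; last exact: depends_on_OP2.
rewrite (big_bitseqs_cat 3 3) !op_prob_bits mulr_suml; apply: eq_big_seq => x hx.
rewrite mulr_sumr; apply: eq_big_seq => y hy.
have szx := size_bitseqs hx.
have -> : OP (coins_of_seq (op_cells 0 ++ op_cells k) (x ++ y)) 0 =
          OP (coins_of_seq (op_cells 0) x) 0.
  by apply: OP0_local => s t hst; apply: coins_of_seq_catl.
have -> : OP (coins_of_seq (op_cells 0 ++ op_cells k) (x ++ y)) k =
          OP (coins_of_seq (op_cells k) y) k.
  rewrite !(OP_shift _ k); congr OP; apply: funext => s; apply: funext => t.
  by rewrite /coins_shift coins_of_seq_catr // !inE !xpair_eqE; lia.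
rewrite OP_coins_of_seq_shift /bern_weight big_cat /= -mulnb natrM; ring.
Qed.

Definition lag1_cells : seq (nat * nat) := [:: (0, 1); (1, 2); (0, 2); (2, 3); (1, 3)]%N.
Definition lag2_cells : seq (nat * nat) := [:: (0, 1); (1, 2); (0, 2); (2, 3); (3, 4); (2, 4)]%N.

Lemma op_prob2_poly (i j : 'I_6) k X : uniq X ->
  all [pred st | (st.1 < st.2 <= k + 2)%N] X -> {subset op_cells 0 ++ op_cells k <= X} ->
  op_prob2 p i j k = bern_count_poly p (size X)
    (fun bs => (OP (coins_of_seq X bs) 0 == pi_op i) && (OP (coins_of_seq X bs) k == pi_op j)).
Proof.
move=> uq window sub.
by rewrite /op_prob2 (@prob_marginal _ _ (k + 2) X) ?sum_bern_counts //; apply: depends_on_OP2.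
Qed.

Lemma op_prob2_lag1 (i j : 'I_6) : op_prob2 p i j 1 = bern_count_poly p 5
  (fun bs => (OP (coins_of_seq lag1_cells bs) 0 == pi_op i) &&
             (OP (coins_of_seq lag1_cells bs) 1 == pi_op j)).
Proof. by rewrite (@op_prob2_poly i j 1 lag1_cells) //; apply/allP. Qed.

Lemma op_prob2_lag2 (i j : 'I_6) : op_prob2 p i j 2 = bern_count_poly p 6
  (fun bs => (OP (coins_of_seq lag2_cells bs) 0 == pi_op i) &&
             (OP (coins_of_seq lag2_cells bs) 2 == pi_op j)).
Proof. by rewrite (@op_prob2_poly i j 2 lag2_cells) //; apply/allP. Qed.

End Independence.

Lemma series_stationary (V : zmodType) (u : V ^nat) m :
  (forall k, (m <= k)%N -> u k = 0) -> \forall n \near eventually, series u n = series u m.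
Proof.
move=> u0; exists m => // n /= mn.
rewrite /series /= (big_cat_nat (n := m) (leq0n m) mn) /= [X in _ + X]big1_seq ?addr0 // => k.
by move=> /andP[_]; rewrite mem_index_iota => /andP[/u0].
Qed.

Lemma cov_series_near (R : realType) (p : R) (i j : 'I_6) :
  \forall n \near eventually,
    series (fun k => cov_term p i j k.+1) n = cov_term p i j 1 + cov_term p i j 2.
Proof.
apply: filterS (series_stationary (u := fun k => cov_term p i j k.+1) (m := 2) _) => [n ->|k k2].
  by rewrite /series /= big_nat_recr //= big_nat1.
by rewrite /cov_term !op_prob2_indep // ?ltnS //; ring.
Qed.

Unset Implicit Arguments.

Theorem proposition3p2 (R : realType) (p : R) (hp0 : 0 < p) (hp1 : p < 1) :
  let q := 1 - p in
  (forall i : 'I_6,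
     op_prob p i = nth 0 [:: p ^+ 2; p ^+ 2 * q; p ^+ 2 * q;
                             p * q ^+ 2; p * q ^+ 2; q ^+ 2] i) /\
  (forall i j : 'I_6, cvgn (series (fun k => cov_term p i j k.+1))) /\
  (forall i j : 'I_6,
     Sigma p i j = nth 0 (nth [::]
       [:: [:: p^+2 * (1 + 2 * p - 3 * p^+2); p^+3 * q * (1 - 3 * p); p^+3 * q * (1 - 3 * p);
               p^+2 * q^+2 * (1 - 3 * p); p^+2 * q^+2 * (1 - 3 * p); - 3 * p^+2 * q^+2];
           [:: p^+3 * q * (1 - 3 * p); p^+2 * q * (1 - 3 * p^+2 * q); p^+3 * q * (1 - 3 * p * q);
               - 3 * p^+3 * q^+3; p^+2 * q^+2 * (1 - 3 * p * q); p^+2 * q^+2 * (1 - 3 * q)];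
           [:: p^+3 * q * (1 - 3 * p); p^+3 * q * (1 - 3 * p * q); p^+2 * q * (1 - 3 * p^+2 * q);
               p^+2 * q^+2 * (1 - 3 * p * q); - 3 * p^+3 * q^+3; p^+2 * q^+2 * (1 - 3 * q)];
           [:: p^+2 * q^+2 * (1 - 3 * p); - 3 * p^+3 * q^+3; p^+2 * q^+2 * (1 - 3 * p * q);
               p * q^+2 * (1 - 3 * p * q^+2); p * q^+3 * (1 - 3 * p * q); p * q^+3 * (3 * p - 2)];
           [:: p^+2 * q^+2 * (1 - 3 * p); p^+2 * q^+2 * (1 - 3 * p * q); - 3 * p^+3 * q^+3;
               p * q^+3 * (1 - 3 * p * q); p * q^+2 * (1 - 3 * p * q^+2); p * q^+3 * (3 * p - 2)];
           [:: - 3 * p^+2 * q^+2; p^+2 * q^+2 * (1 - 3 * q); p^+2 * q^+2 * (1 - 3 * q);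
               p * q^+3 * (3 * p - 2); p * q^+3 * (3 * p - 2); p * q^+2 * (4 - 3 * p)]] i) j).
Proof.
rewrite /=; split; first exact: op_probE.
split=> i j; first exact: is_cvg_near_cst (cov_series_near p i j).
rewrite /Sigma (lim_near_cst (@Rhausdorff R) (cov_series_near p i j)).
rewrite /cov_term !op_prob2_lag1 !op_prob2_lag2 !op_prob_poly /bern_count_poly.
case: i => [[|[|[|[|[|[|i]]]]]] hi] //; case: j => [[|[|[|[|[|[|j]]]]]] hj] //=;
  rewrite !big_cons !big_nil; eval_counts; rewrite /=; ring.
Qed.
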